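(* Let $E$ be a graph and $X\subseteq{\rm Reg}(E)$. Then $D(\partial_X(E))\delta_0=\{a\delta_0:a\in D(\partial_X(E))\}$ is a maximal commutative subring of $D(\partial_X(E))\rtimes_\alpha\mathbb F$ (i.e., every element of $D(\partial_X(E))\rtimes_\alpha\mathbb F$ commuting with all of $D(\partial_X(E))\delta_0$ lies in $D(\partial_X(E))\delta_0$) if and only if $E$ satisfies Relative Condition (L).
   Context: Let $K$ be a field and $E=(E^0,E^1,r,s)$ a directed graph. A vertex $v$ is a sink if $s^{-1}(v)=\emptyset$, regular if $s^{-1}(v)$ is finite and nonempty; ${\rm Reg}(E)$ is the set of regular vertices; $Y={\rm Reg}(E)\setminus X$. Finite paths are $\xi_1\cdots\xi_n$ with $r(\xi_i)=s(\xi_{i+1})$, vertices being paths of length $0$; $E^\infty$ is the set of infinite paths. A cycle is a path $e_1\cdots e_n$ ($n\ge1$) with $r(e_n)=s(e_1)$ and $s(e_i)\ne s(e_j)$ for $i\neq j$; an exit is an edge $e$ with $s(e)=s(e_i)$ for some $i$ and $e\ne e_i$. $E$ satisfies Relative Condition (L) if every cycle $e_1\cdots e_n$ with $s(e_i)\notin Y$ for all $i$ has an exit. The relative boundary path space is $\partial_X(E)=E^\infty\cup\{\xi \text{ finite path}: r(\xi)\text{ is a sink}\}\cup\{\xi\text{ finite path}: r(\xi)\in Y\}$. Let $\mathbb F$ be the free group on $E^1$ with identity $0$, and $W$ the set of finite paths of length $\ge1$, viewed in $\mathbb F$. Define subsets of $\partial_X(E)$: $U_0=\partial_X(E)$; $U_{b^{-1}}=\{\xi: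 s(\xi)=r(b)\}$ for $b\in W$; $U_a=\{\xi: \xi_1\cdots\xi_{|a|}=a\}$ for $a\in W$; $U_{ab^{-1}}=U_a$ for $a,b\in W$ with $r(a)=r(b)$ and $a_{|a|}\ne b_{|b|}$; $U_c=\emptyset$ for all other $c$; and $U_v=\{\xi: s(\xi)=v\}$ for $v\in E^0$. Maps $\theta_c:U_{c^{-1}}\to U_c$: $\theta_0={\rm id}$; $\theta_b(\xi)=b\xi$ for $b\in W$; $\theta_{b^{-1}}$ deletes the initial segment $b$ (sending $b$ to $r(b)$); $\theta_{ab^{-1}}$ deletes the initial segment $b$ and prepends $a$. Let $1_c$, $1_v$ be the characteristic functions of $U_c$, $U_v$ (functions $\partial_X(E)\to K$). Put $D_0=D(\partial_X(E))={\rm span}_K(\{1_p:p\ne0\}\cup\{1_v:v\in E^0\})$ and $D_p={\rm span}_K\{1_p1_q:q\in\mathbb F\}$ for $p\neq0$; $\alpha_p:D_{p^{-1}}\to D_p$, $\alpha_p(f)=f\circ\theta_{p^{-1}}$ on $U_p$ and $0$ elsewhere. $D(\partial_X(E))\rtimes_\alpha\mathbb F$ is the set of finite sums $\sum a_t\delta_t$, $a_t\in D_t$, with multiplication $(a_t\delta_t)(b_s\delta_s)=\alpha_t(\alpha_{t^{-1}}(a_t)b_s)\delta_{ts}$. *)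

From HB Require Import structures.
From mathcomp Require Import all_boot all_order all_algebra.
From Stdlib Require Import ClassicalEpsilon.
From Stdlib Require List.
Set Implicit Arguments. Unset Strict Implicit. Unset Printing Implicit Defensive.
Import GRing.Theory.
Local Open Scope ring_scope.

Definition decP (P : Prop) : bool :=
  if excluded_middle_informative P then true else false.

(* A directed graph E = (E^0, E^1, r, s); vertices and edges are arbitrary
   types with (classically always available) decidable equality. *)
Record graph := Graph {
  vert : eqType;
  edge : eqType;
  gr : edge -> vert;
  gs : edge -> vert
}.

Section GraphAlgebra.
Variable E : graph.
Variable X : vert E -> Prop.
Variable K : fieldType.

Local Notation V := (vert E).
Local Notation Ed := (edge E).
Local Notation r := (@gr E).
Local Notation s := (@gs E).

Definition is_sink (v : V) : Prop := forall e : Ed, s e <> v.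
Definition is_regular (v : V) : Prop :=
  (exists e : Ed, s e = v) /\ (exists l : seq Ed, forall e, s e = v -> e \in l).
Definition Yset (v : V) : Prop := is_regular v /\ ~ X v.

Definition consec (e f : Ed) : bool := r e == s f.
Definition ispath (a : seq Ed) : bool := (a != [::]) && sorted consec a.

(* Paths: a finite path is a start vertex together with its list of edges
   (length 0 = the vertex itself); an infinite path is a sequence of edges. *)
Inductive bpath : Type :=
| BFin of V & seq Ed
| BInf of (nat -> Ed).

Definition valid (xi : bpath) : Prop :=
  match xi with
  | BFin v p => sorted consec p /\ (if p is e :: _ then s e = v else True)
  | BInf f => forall i, r (f i) = s (f i.+1)
  end.

Definition bsrc (xi : bpath) : V :=
  match xi with BFin v _ => v | BInf f => s (f 0%N) end.

Definition frange (v : V) (p : seq Ed) : V := last v (map r p).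

Definition boundary (xi : bpath) : Prop :=
  valid xi /\
  match xi with
  | BInf _ => True
  | BFin v p => is_sink (frange v p) \/ Yset (frange v p)
  end.

Definition hasprefix (xi : bpath) (a : seq Ed) : Prop :=
  match xi with
  | BFin _ p => prefix a p
  | BInf f => a = mkseq f (size a)
  end.

Definition prepend (a : seq Ed) (xi : bpath) : bpath :=
  match xi with
  | BFin v p => BFin (if a is e :: _ then s e else v) (a ++ p)
  | BInf f => BInf (fun i => if (i < size a)%N then nth (f 0%N) a i
                             else f (i - size a)%N)
  end.

Definition dropp (n : nat) (xi : bpath) : bpath :=
  match xi with
  | BFin v p => BFin (last v (map r (take n p))) (drop n p)
  | BInf f => BInf (fun i => f (i + n)%N)
  end.

(* The free group F on E^1: reduced words of letters (b, e), where
   (true, e) = e and (false, e) = e^{-1}; the identity 0 is [::]. *)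
Definition letter := (bool * Ed)%type.
Definition word := seq letter.
Definition not_cancel (l l' : letter) : bool := ~~ ((l.2 == l'.2) && (l.1 != l'.1)).
Definition reduced (w : word) : bool := sorted not_cancel w.
Definition push (l : letter) (w : word) : word :=
  match w with
  | l' :: w' => if (l'.2 == l.2) && (l'.1 != l.1) then w' else l :: w
  | [::] => [:: l]
  end.
Definition wmul (u w : word) : word := foldr push w u.
Definition winv (w : word) : word := rev (map (fun l : letter => (~~ l.1, l.2)) w).

(* Classification of c in F:  0, a (a in W), b^{-1} (b in W),
   a b^{-1} (a,b in W, r(a)=r(b), a_{|a|} <> b_{|b|}), or other. *)
Inductive wkind :=
| K0 | KPos of seq Ed | KNeg of seq Ed | KMix of seq Ed & seq Ed | KNone.

Definition classify (w : word) : wkind :=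
  let n := find (fun l : letter => ~~ l.1) w in
  let a := map snd (take n w) in
  let rest := drop n w in
  let b := rev (map snd rest) in
  if w == [::] then K0
  else if ~~ all (fun l : letter => ~~ l.1) rest then KNone
  else if b == [::] then (if ispath a then KPos a else KNone)
  else if a == [::] then (if ispath b then KNeg b else KNone)
  else match a, b with
       | ea :: a', eb :: b' =>
           if [&& ispath a, ispath b, r (last ea a') == r (last eb b')
                 & last ea a' != last eb b']
           then KMix a b else KNone
       | _, _ => KNone
       end.

Definition U (c : word) (xi : bpath) : Prop :=
  match classify c with
  | K0 => boundary xi
  | KPos a => boundary xi /\ hasprefix xi a
  | KNeg b => boundary xi /\ (if b is eb :: b' then bsrc xi = r (last eb b') else False)
  | KMix a _ => boundary xi /\ hasprefix xi a
  | KNone => False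
  end.

Definition Uv (v : V) (xi : bpath) : Prop := boundary xi /\ bsrc xi = v.

(* the maps theta_c : U_{c^{-1}} -> U_c (identity outside their domain) *)
Definition theta (c : word) (xi : bpath) : bpath :=
  match classify c with
  | K0 => xi
  | KPos a => prepend a xi
  | KNeg b => dropp (size b) xi
  | KMix a b => prepend a (dropp (size b) xi)
  | KNone => xi
  end.

(* K-valued functions on paths; all functions built below vanish outside
   partial_X(E), so they are functions on partial_X(E). *)
Definition fn := bpath -> K.
Definition ind (P : bpath -> Prop) : fn := fun xi => if decP (P xi) then 1 else 0.
Definition one (c : word) : fn := ind (U c).
Definition onev (v : V) : fn := ind (Uv v).

Inductive span (S : fn -> Prop) : fn -> Prop :=
| span0 : span S (fun _ => 0)
| spanS (k : K) (g f : fn) : S g -> span S f -> span S (fun xi => k * g xi + f xi).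

Definition D0 : fn -> Prop :=
  span (fun g => (exists p, [/\ reduced p, p != [::] & g = one p]) \/
                 (exists v, g = onev v)).
Definition Dp (p : word) : fn -> Prop :=
  span (fun g => exists q, reduced q /\ g = (fun xi => one p xi * one q xi)).
Definition Dt (t : word) : fn -> Prop := if t == [::] then D0 else Dp t.

Definition alpha (p : word) (f : fn) : fn :=
  fun xi => if decP (U p xi) then f (theta (winv p) xi) else 0.

(* Crossed product D(partial_X(E)) x|_alpha F: an element sum a_t delta_t is
   given by a finite list of pairs (t, a_t) with t in F and a_t in D_t. *)
Definition cp := seq (word * fn).
Definition cp_elem (x : cp) : Prop :=
  forall pr, List.In pr x -> reduced pr.1 /\ Dt pr.1 pr.2.
Definition coef (x : cp) (t : word) : fn :=
  fun xi => \sum_(pr <- x | pr.1 == t) pr.2 xi.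
Definition cp_eq (x y : cp) : Prop := forall t xi, coef x t xi = coef y t xi.
(* (a_t delta_t)(b_s delta_s) = alpha_t(alpha_{t^{-1}}(a_t) b_s) delta_{ts} *)
Definition cp_mul (x y : cp) : cp :=
  [seq (wmul p.1 q.1,
        alpha p.1 (fun xi => alpha (winv p.1) p.2 xi * q.2 xi)) | p <- x, q <- y].
Definition delta0 (a : fn) : cp := [:: ([::], a)].

Definition D0_maximal_commutative : Prop :=
  forall x : cp, cp_elem x ->
    (forall b, D0 b -> cp_eq (cp_mul x (delta0 b)) (cp_mul (delta0 b) x)) ->
    exists a, D0 a /\ cp_eq x (delta0 a).

Definition is_cycle (c : seq Ed) : Prop :=
  ispath c /\
  (match c with e :: c' => r (last e c') = s e | [::] => False end) /\
  uniq (map s c).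

Definition rel_condL : Prop :=
  forall c : seq Ed, is_cycle c -> (forall e, e \in c -> ~ Yset (s e)) ->
    exists (e : Ed) (i : nat),
      (i < size c)%N /\ s e = s (nth e c i) /\ e <> nth e c i.

End GraphAlgebra.

(* The diagonal D(partial_X E) delta_0 is maximal commutative exactly when the
   partial action theta of the free group is topologically free.  If x = sum a_t delta_t
   commutes with every b delta_0, then a_t(xi) (b(theta_{t^-1} xi) - b(xi)) = 0; since D
   separates points, a_t vanishes off the fixed points of theta_{t^-1}, and since a_t is
   locally constant it vanishes everywhere as soon as these fixed points have empty
   interior.  A fixed point of theta_{t^-1} is an eventually periodic infinite path; by
   Relative Condition (L) the cycle it winds around meets Y or has an exit, so arbitrarily
   close to it there are boundary paths that are cut off at Y or leave through the exit,
   and these are not fixed.  Conversely, for a cycle c without exits that avoids Y the set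
   U_c is the single point c c c ..., fixed by theta_c, so 1_c delta_c commutes with
   D delta_0 without lying in it. *)

From mathcomp Require Import all_boot all_order all_algebra.
From Stdlib Require Import ClassicalEpsilon Classical FunctionalExtensionality.
From mathcomp Require Import zify.
Set Implicit Arguments. Unset Strict Implicit. Unset Printing Implicit Defensive.
Import GRing.Theory.

Lemma decPT (P : Prop) : P -> decP P = true.
Proof. by rewrite /decP; case: excluded_middle_informative. Qed.

Lemma decPF (P : Prop) : ~ P -> decP P = false.
Proof. by rewrite /decP; case: excluded_middle_informative. Qed.

Lemma decPE (P : Prop) : decP P <-> P.
Proof. by rewrite /decP; case: excluded_middle_informative. Qed.

Lemma eq_decP (P Q : Prop) : (P <-> Q) -> decP P = decP Q.
Proof.
move=> PQ; case: (classic P) => HP; first by rewrite !decPT //; apply/PQ.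
by rewrite !decPF // => /PQ.
Qed.

Lemma take_mkseq (T : Type) (f : nat -> T) m n :
  (m <= n)%N -> take m (mkseq f n) = mkseq f m.
Proof. by move=> mn; rewrite /mkseq -map_take take_iota (minn_idPl mn). Qed.

Lemma sorted_mkseq (T : Type) (R : rel T) (f : nat -> T) n :
  (forall i, (i.+1 < n)%N -> R (f i) (f i.+1)) -> sorted R (mkseq f n).
Proof.
move=> Rf; apply/(sortedP (f 0%N)) => i; rewrite size_mkseq => lt_in.
by rewrite !nth_mkseq ?(ltnW lt_in) // Rf.
Qed.

Definition periodic_from (T : Type) (n k : nat) (f : nat -> T) :=
  forall j, (n <= j)%N -> f (j + k)%N = f j.

Lemma eq_periodic_from (T : Type) (f g : nat -> T) n k N :
  (0 < k)%N -> (n + k <= N)%N -> periodic_from n k f -> periodic_from n k g ->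
  (forall j, (j < N)%N -> f j = g j) -> f = g.
Proof.
move=> k_gt0 le_nkN per_f per_g eq_fg; apply: functional_extensionality => j.
elim: j {-2}j (leqnn j) => [|m IHm] j le_jm.
  by move: le_jm; rewrite leqn0 => /eqP ->; apply: eq_fg; lia.
case: (ltnP j N) => [|le_Nj]; first exact: eq_fg.
have -> : j = (j - k + k)%N by lia.
by rewrite per_f ?per_g; [apply: IHm| |]; lia.
Qed.

Definition cycle_inf (T : Type) (x0 : T) (c : seq T) (i : nat) := nth x0 c (i %% size c).

Lemma cycle_inf_small (T : Type) (x0 : T) c i : (i < size c)%N -> cycle_inf x0 c i = nth x0 c i.
Proof. by move=> lt_ic; rewrite /cycle_inf modn_small. Qed.

Lemma cycle_inf_periodic (T : Type) (x0 : T) c i : cycle_inf x0 c (i + size c) = cycle_inf x0 c i.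
Proof. by rewrite /cycle_inf modnDr. Qed.

Lemma mkseq_cycle_inf (T : Type) (x0 : T) c : mkseq (cycle_inf x0 c) (size c) = c.
Proof.
apply: (@eq_from_nth _ x0); first by rewrite size_mkseq.
by move=> i; rewrite size_mkseq => lt_ic; rewrite nth_mkseq // cycle_inf_small.
Qed.

Lemma cycle_inf_mem (T : eqType) (x0 : T) c i : c != [::] -> cycle_inf x0 c i \in c.
Proof. by rewrite -size_eq0 -lt0n => c_gt0; rewrite mem_nth // ltn_pmod. Qed.

Section Words.
Variable E : graph.
Local Notation Ed := (edge E).
Local Notation r := (@gr E).
Local Notation is_inv := (fun l : letter E => ~~ l.1).

Definition pos (a : seq Ed) : word E := map (fun e => (true, e)) a.
Definition neg (b : seq Ed) : word E := winv (pos b).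

Lemma winvK : involutive (@winv E).
Proof.
move=> w; rewrite /winv map_rev revK -map_comp -[RHS]map_id.
by apply: eq_map => -[b e] /=; rewrite negbK.
Qed.

Lemma winv_cat (u w : word E) : winv (u ++ w) = winv w ++ winv u.
Proof. by rewrite /winv map_cat rev_cat. Qed.

Lemma winv_pos a : winv (pos a) = neg a.
Proof. by []. Qed.

Lemma winv_neg b : winv (neg b) = pos b.
Proof. exact: winvK. Qed.

Lemma neg_eq0 b : (neg b == [::]) = (b == [::]).
Proof. by rewrite -!size_eq0 /neg /winv size_rev !size_map. Qed.

Lemma reduced_pos a : reduced (pos a).
Proof.
rewrite /reduced; elim: a => [|e [|e' a] IHa] //=.
by rewrite /not_cancel /= andbF.
Qed.

Lemma classify_pos_neg a b :
  classify (pos a ++ neg b) =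
  if (pos a ++ neg b) == [::] then K0 E
  else if b == [::] then (if ispath a then KPos a else KNone E)
  else if a == [::] then (if ispath b then KNeg b else KNone E)
  else match a, b with
       | ea :: a', eb :: b' =>
           if [&& ispath a, ispath b, r (last ea a') == r (last eb b')
                 & last ea a' != last eb b']
           then KMix a b else KNone E
       | _, _ => KNone E
       end.
Proof.
rewrite /classify.
have neg_inv : all is_inv (neg b).
  by rewrite all_rev all_map; apply/allP => -[? ?] /mapP[? _ [-> _]].
have -> : find is_inv (pos a ++ neg b) = size a.
  elim: a => [|e a /= -> //]; move: neg_inv.
  by rewrite cat0s; case: (neg b) => //= l w /andP[->].
rewrite take_size_cat ?size_map // drop_size_cat ?size_map //.
by rewrite -map_comp map_id map_rev revK -!map_comp map_id neg_inv.
Qed.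

Lemma classify_pos a : ispath a -> classify (pos a) = KPos a.
Proof.
case: a => [|e a] // pa.
have -> : pos (e :: a) = pos (e :: a) ++ neg [::] by rewrite cats0.
by rewrite classify_pos_neg /= pa.
Qed.

Lemma classify_neg b : ispath b -> classify (neg b) = KNeg b.
Proof.
case: b => [|e b] // pb.
have -> : neg (e :: b) = pos [::] ++ neg (e :: b) by [].
by rewrite classify_pos_neg neg_eq0 /= pb.
Qed.

Lemma classify_cases (w : word E) :
  [\/ w = [::], classify w = KNone E | exists a b, w = pos a ++ neg b].
Proof.
have [->|w0] := eqVneq w [::]; first by constructor 1.
set n := find is_inv w.
have [negs|] := boolP (all is_inv (drop n w)); last first.
  by move=> /negPf negs; constructor 2; rewrite /classify (negPf w0) -/n negs.
constructor 3; exists (map snd (take n w)), (rev (map snd (drop n w))).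
rewrite -[LHS](cat_take_drop n); congr (_ ++ _).
  rewrite /n; elim: w {w0 n negs} => //= -[[] e] w IHw //=.
  by rewrite {1}IHw /pos -!map_comp.
rewrite /neg /winv /pos !map_rev revK -!map_comp -[LHS]map_id.
by apply/eq_in_map => -[[] e] /= /(allP negs).
Qed.

Lemma wmulw0 (w : word E) : reduced w -> wmul w [::] = w.
Proof.
rewrite /reduced; elim: w => [|l w IHw] // rw.
rewrite /wmul /= -/(wmul w [::]) IHw; last exact: path_sorted rw.
case: w rw {IHw} => [|l' w] //= /andP[+ _].
rewrite /not_cancel /=; case: ifP => // /andP[/eqP -> ne_l].
by rewrite eqxx eq_sym ne_l.
Qed.

End Words.

Section BoundaryPaths.
Variable E : graph.
Variable X : vert E -> Prop.
Local Notation V := (vert E).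
Local Notation Ed := (edge E).
Local Notation r := (@gr E).
Local Notation s := (@gs E).
Local Notation bpath := (bpath E).
Local Notation boundary := (boundary X).

Lemma prepend_nil (xi : bpath) : prepend [::] xi = xi.
Proof.
by case: xi => //= f; congr BInf; apply: functional_extensionality => i; rewrite subn0.
Qed.

Lemma dropp0 (xi : bpath) : dropp 0 xi = xi.
Proof.
case: xi => [v p|f] /=; first by rewrite take0 drop0.
by congr BInf; apply: functional_extensionality => i; rewrite addn0.
Qed.

Lemma hasprefix_nil (xi : bpath) : hasprefix xi [::].
Proof. by case: xi => [v p|f] //=; apply: prefix0s. Qed.

Definition btake (n : nat) (xi : bpath) : seq Ed :=
  match xi with BFin _ p => take n p | BInf f => mkseq f n end.

Lemma btake0 (xi : bpath) : btake 0 xi = [::].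
Proof. by case: xi => [v p|f] //=; rewrite take0. Qed.

Lemma btake_take m n (xi : bpath) : (m <= n)%N -> btake m xi = take m (btake n xi).
Proof. by move=> le_mn; case: xi => [v p|f] /=; rewrite ?take_takel ?take_mkseq. Qed.

Lemma hasprefixE (xi : bpath) a : hasprefix xi a <-> btake (size a) xi = a.
Proof.
case: xi => [v p|f] /=; last by split=> ->; rewrite ?size_mkseq.
by rewrite prefixE; split=> [/eqP|->].
Qed.

Lemma hasprefix_btake n (xi : bpath) : hasprefix xi (btake n xi).
Proof.
apply/hasprefixE; case: xi => [v p|f] /=; last by rewrite size_mkseq.
by rewrite size_take; case: ltnP => // le_pn; rewrite take_size take_oversize.
Qed.

Lemma sorted_btake n (xi : bpath) : valid xi -> sorted (@consec E) (btake n xi).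
Proof.
case: xi => [v p [sp _]|f vf] /=; first exact: take_sorted.
by apply: sorted_mkseq => i _; rewrite /consec vf.
Qed.

Lemma bpath_ext (xi eta : bpath) : bsrc xi = bsrc eta ->
  (forall n, btake n xi = btake n eta) -> xi = eta.
Proof.
case: xi => [v p|f]; case: eta => [w q|g] /= eq_src eq_take.
- rewrite eq_src; congr BFin.
  by move: (eq_take (size p + size q)%N); rewrite !take_oversize //; lia.
- by move: (congr1 size (eq_take (size p).+1)); rewrite size_mkseq size_take; case: ifP; lia.
- by move: (congr1 size (eq_take (size q).+1)); rewrite size_mkseq size_take; case: ifP; lia.
- congr BInf; apply: functional_extensionality => i.
  by rewrite -(nth_mkseq (f 0%N) f (ltnSn i)) eq_take nth_mkseq.
Qed.

Definition same_cylinder (N : nat) (xi eta : bpath) :=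
  bsrc xi = bsrc eta /\ btake N xi = btake N eta.

Lemma same_cylinder_le m n (xi eta : bpath) :
  (m <= n)%N -> same_cylinder n xi eta -> same_cylinder m xi eta.
Proof. by move=> le_mn [eq_src eq_take]; split; rewrite // !(btake_take _ le_mn) eq_take. Qed.

Lemma bsrc_prepend a (xi : bpath) : bsrc (prepend a xi) = head (bsrc xi) (map s a).
Proof. by case: xi; case: a. Qed.

Lemma btake_prepend a (xi : bpath) N : (N <= size a)%N -> btake N (prepend a xi) = take N a.
Proof.
move=> le_Na; case: xi => [v p|g] /=; first by rewrite takel_cat.
apply: (@eq_from_nth _ (g 0%N)); first by rewrite size_mkseq size_takel.
move=> j; rewrite size_mkseq => lt_jN; have lt_ja := leq_trans lt_jN le_Na.
by rewrite nth_mkseq // nth_take // lt_ja.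
Qed.

Lemma prepend_boundary e a (xi : bpath) : sorted (@consec E) (e :: a) ->
  boundary xi -> bsrc xi = r (last e a) -> boundary (prepend (e :: a) xi).
Proof.
move=> sa [+ end_xi]; case: xi end_xi => [v p|g] /=.
  move=> end_p [sp head_p] src_v; split; last first.
    suff -> : frange (s e) (e :: a ++ p) = frange v p by [].
    rewrite /frange -cat_cons map_cat last_cat.
    by case: p {sp end_p} head_p => [|e1 p] //= _; rewrite last_map src_v.
  split=> //; rewrite /= cat_path -/(sorted _ (e :: a)) sa.
  by case: p {end_p} sp head_p => [|e1 p] //= -> se1; rewrite /consec se1 src_v eqxx.
move=> _ vg src_g; split=> // i.
case: (ltngtP i.+1 (size a).+1) => cmp.
- by move/(sortedP (g 0%N)): sa => /(_ i cmp) /eqP.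
- by rewrite subSn ?vg //; lia.
- case: cmp => ->; rewrite subnn src_g.
  by have := nth_last (g 0%N) (e :: a); rewrite /= => ->.
Qed.

Lemma exists_boundary_path (w : V) : exists xi, boundary xi /\ bsrc xi = w.
Proof.
have [sink_w|/not_all_ex_not[e0 _]] := classic (is_sink w).
  by exists (BFin w [::]); do 2 split=> //; left.
(* Follow a chosen edge out of each vertex, stopping at the first sink if any. *)
pose next v := epsilon (inhabits e0) (fun e => s e = v).
have s_next v : ~ is_sink v -> s (next v) = v.
  move=> nsink; apply: (epsilon_spec (inhabits e0) (fun e => s e = v)).
  by apply: NNPP => none; apply: nsink => e se; apply: none; exists e.
pose vs n := iter n (fun v => r (next v)) w.
pose es n := next (vs n).
have [[m sink_m]|nosink] := classic (exists n, is_sink (vs n)); last first.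
  have s_es i : s (es i) = vs i by apply: s_next => sink_i; apply: nosink; exists i.
  by exists (BInf es); split; [split=> // i; rewrite s_es|rewrite /= s_es].
have ex_sink : exists n, decP (is_sink (vs n)) by exists m; apply: decPT.
case: (ex_minnP ex_sink) => {sink_m}m /decPE sink_m min_m.
have s_es i : (i < m)%N -> s (es i) = vs i.
  by move=> lt_im; apply: s_next => sink_i; have := min_m i (decPT sink_i); lia.
have range_es k : last w (map r (mkseq es k)) = vs k.
  by elim: k => [|k IHk] //; rewrite mkseqS map_rcons last_rcons.
exists (BFin w (mkseq es m)); split=> //; split; last by left; rewrite /frange range_es.
split; first by apply: sorted_mkseq => i lt_im; rewrite /consec s_es.
by case: m {min_m sink_m range_es} s_es => [|m] //= /(_ 0%N isT).
Qed.

Definition shift_period (a u : seq Ed) := ((size a - size u) + (size u - size a))%N.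

Lemma fixed_shift_periodic (a u : seq Ed) (xi : bpath) : u != a -> hasprefix xi a ->
  prepend u (dropp (size a) xi) = xi ->
  exists f, [/\ xi = BInf f, (0 < shift_period a u)%N
             & periodic_from (size a) (shift_period a u) f].
Proof.
move=> ne_ua; case: xi => [v p|f] /=.
  rewrite prefixE => /eqP pre_p [_ fix_p]; case/negP: ne_ua; apply/eqP.
  have le_ap : (size a <= size p)%N by rewrite -pre_p size_take_min geq_minr.
  have size_u : size u = size a.
    by move: (congr1 size fix_p); rewrite size_cat size_drop; lia.
  by rewrite -pre_p -fix_p take_size_cat.
move=> pre_f [fix_f]; exists f.
have fE i : f i = if (i < size u)%N then nth (f (0 + size a)%N) u i else f (i - size u + size a)%N.
  by rewrite -{1}fix_f.
case: (ltngtP (size u) (size a)) => cmp.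
- split=> //; first by rewrite /shift_period; lia.
  move=> j le_aj; rewrite (fE j) ifF; last by apply/negbTE; rewrite -leqNgt; lia.
  by congr f; rewrite /shift_period; lia.
- split=> //; first by rewrite /shift_period; lia.
  move=> j le_aj; rewrite (fE (j + _)%N) ifF; last by apply/negbTE; rewrite -leqNgt /shift_period; lia.
  by congr f; rewrite /shift_period; lia.
- case/negP: ne_ua; apply/eqP; apply: (@eq_from_nth _ (f 0%N)) => // i lt_iu.
  by rewrite pre_f nth_mkseq -?cmp // (fE i) lt_iu; apply: set_nth_default.
Qed.

Lemma theta_inv_shift (t : word E) : t != [::] -> classify t <> KNone E ->
  exists a u : seq Ed, u != a /\ forall xi, U X t xi ->
    hasprefix xi a /\ theta (winv t) xi = prepend u (dropp (size a) xi).
Proof.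
case: (classify_cases t) => [->|->|[a [b ->]]] //.
rewrite winv_cat winv_neg winv_pos /U /theta !classify_pos_neg.
case: a => [|ea a]; case: b => [|eb b] //=; rewrite ?neg_eq0 /=.
- move=> _; case: ifP => // _ _; exists [::], (eb :: b); split=> // xi _.
  by rewrite dropp0; split=> //; apply: hasprefix_nil.
- move=> _; case: ifP => // _ _; exists (ea :: a), [::].
  by split=> // xi [_ ?]; rewrite prepend_nil.
- move=> _; case: ifP => // /and4P[pa pb eq_r ne_last] _.
  rewrite pa pb eq_sym eq_r eq_sym ne_last /=.
  exists (ea :: a), (eb :: b); split=> [|xi [_ ?] //].
  by apply/negP => /eqP[eq_e eq_a]; move: ne_last; rewrite eq_e eq_a eqxx.
Qed.

End BoundaryPaths.

Section Functions.
Variable E : graph.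
Variable X : vert E -> Prop.
Variable K : fieldType.
Local Notation bpath := (bpath E).
Local Notation fn := (fn E K).
Local Notation boundary := (boundary X).
Local Notation U := (U X).
Local Notation one := (one X K).
Local Notation onev := (onev X K).
Local Notation D0 := (D0 X (K := K)).
Local Open Scope ring_scope.

Lemma indT (P : bpath -> Prop) xi : P xi -> ind K P xi = 1.
Proof. by move=> Pxi; rewrite /ind decPT. Qed.

Lemma indF (P : bpath -> Prop) xi : ~ P xi -> ind K P xi = 0.
Proof. by move=> nPxi; rewrite /ind decPF. Qed.

Lemma U_boundary t xi : U t xi -> boundary xi.
Proof. by rewrite /U; case: classify => [|a|b|a b|] // []. Qed.

Lemma U_pos d xi : ispath d -> U (pos d) xi <-> boundary xi /\ hasprefix xi d.
Proof. by move=> pd; rewrite /U classify_pos. Qed.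

Lemma span_gen (S : fn -> Prop) g : S g -> span S g.
Proof.
move=> Sg; have := spanS 1 Sg (span0 S).
by congr span; apply: functional_extensionality => xi; rewrite mul1r addr0.
Qed.

Lemma span_lin (S : fn -> Prop) k f g : span S f -> span S g ->
  span S (fun xi => k * f xi + g xi).
Proof.
move=> Sf Sg; elim: Sf => [|k' g' f' Sg' _ IHf].
  by congr span: Sg; apply: functional_extensionality => xi; rewrite mulr0 add0r.
have := spanS (k * k') Sg' IHf; congr span; apply: functional_extensionality => xi.
by rewrite mulrDr addrA mulrA.
Qed.

Lemma span_add (S : fn -> Prop) f g : span S f -> span S g ->
  span S (fun xi => f xi + g xi).
Proof.
move=> Sf Sg; have := span_lin 1 Sf Sg; congr span.
by apply: functional_extensionality => xi; rewrite mul1r.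
Qed.

Lemma span_sub (S : fn -> Prop) f g : span S f -> span S g ->
  span S (fun xi => f xi - g xi).
Proof.
move=> Sf Sg; have := span_lin (-1) Sg Sf; congr span.
by apply: functional_extensionality => xi; rewrite mulN1r addrC.
Qed.

Lemma D0_one_pos d : ispath d -> D0 (one (pos d)).
Proof.
move=> pd; apply: span_gen; left; exists (pos d); split=> //; first exact: reduced_pos.
by case: d pd.
Qed.

Lemma D0_onev v : D0 (onev v).
Proof. by apply: span_gen; right; exists v. Qed.

Definition separates (b : fn) (xi eta : bpath) := [/\ D0 b, b xi = 1 & b eta = 0].

Lemma separates_source (xi eta : bpath) : boundary xi ->
  ~ (boundary eta /\ bsrc eta = bsrc xi) -> separates (onev (bsrc xi)) xi eta.
Proof. by move=> bxi other; split; [exact: D0_onev|exact: indT|exact: indF]. Qed.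

Lemma separates_prefix d (xi eta : bpath) : ispath d -> boundary xi ->
  hasprefix xi d -> ~ hasprefix eta d -> separates (one (pos d)) xi eta.
Proof.
move=> pd bxi xi_d eta_d; split; first exact: D0_one_pos.
  by apply: indT; apply/U_pos.
by apply: indF; rewrite U_pos // => -[].
Qed.

Lemma separates_extension v p d (eta : bpath) : boundary (BFin v p) ->
  boundary eta -> bsrc eta = v -> ispath d -> hasprefix eta d -> size d = (size p).+1 ->
  separates (fun xi => onev v xi - one (pos d) xi) (BFin v p) eta.
Proof.
move=> bxi beta src_eta pd eta_d size_d; split.
- by apply: span_sub; [exact: D0_onev|exact: D0_one_pos].
- rewrite /onev /one (indT (P := Uv X v)) // (indF (P := U (pos d))) ?subr0 //.
  rewrite U_pos // => -[_ /hasprefixE]; rewrite size_d /= take_oversize // => p_d.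
  by move: (congr1 size p_d); rewrite size_d => /n_Sn.
- by rewrite /onev /one !indT ?subrr //; apply/U_pos.
Qed.

Lemma size_btake_extension (eta : bpath) p n : (size p < n)%N ->
  hasprefix eta p -> btake n eta != p -> size (btake (size p).+1 eta) = (size p).+1.
Proof.
move=> lt_pn; case: eta => [w q|g]; last by rewrite /btake size_mkseq.
rewrite /= prefixE => /eqP q_p ne_q; rewrite size_takel // ltnNge; apply/negP => le_qp.
by move: ne_q q_p; rewrite !take_oversize ?(leq_trans le_qp (ltnW lt_pn)) // => /eqP.
Qed.

Lemma D0_separates (xi eta : bpath) : boundary xi -> xi <> eta ->
  exists b, separates b xi eta.
Proof.
move=> bxi ne_xi_eta.
have [[beta src_eta]|other] := classic (boundary eta /\ bsrc eta = bsrc xi); last first.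
  by exists (onev (bsrc xi)); apply: separates_source.
have [n ne_n] : exists n, btake n xi != btake n eta.
  apply: NNPP => eq_n; apply: ne_xi_eta; apply: bpath_ext => // n.
  by have [//|ne_n] := eqVneq (btake n xi) (btake n eta); case: eq_n; exists n.
have vxi : valid xi by case: bxi.
have [full|short] := eqVneq (size (btake n xi)) n.
  have d0 : btake n xi != [::].
    by apply: contraNneq ne_n => d0; move: full; rewrite d0 => <-; rewrite !btake0.
  exists (one (pos (btake n xi))); apply: separates_prefix => //.
  - by rewrite /ispath d0 sorted_btake.
  - exact: hasprefix_btake.
  - by move/hasprefixE; rewrite full => eq_n; rewrite eq_n eqxx in ne_n.
(* Now xi = (v, p) with p shorter than n: either p is not a prefix of eta, or eta
   strictly extends p. *)
case: xi vxi ne_n short bxi {ne_xi_eta} src_eta => [v p|f] vxi /=; last by rewrite size_mkseq eqxx.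
move=> ne_n short bxi src_eta.
have lt_pn : (size p < n)%N by move: short; rewrite size_take; case: ltnP; lia.
rewrite take_oversize ?(ltnW lt_pn) // eq_sym in ne_n.
have [eta_p|eta_p] := classic (hasprefix eta p); last first.
  have p0 : p != [::] by apply/eqP => p0; apply: eta_p; rewrite p0; apply: hasprefix_nil.
  exists (one (pos p)); apply: separates_prefix => //; first by rewrite /ispath p0; case: vxi.
  exact: prefix_refl.
set d := btake (size p).+1 eta.
have size_d : size d = (size p).+1 by apply: size_btake_extension ne_n.
exists (fun xi => onev v xi - one (pos d) xi); apply: separates_extension => //.
- by rewrite /ispath -size_eq0 size_d sorted_btake //; case: beta.
- exact: hasprefix_btake.
Qed.

Definition determined_at (L : nat) (f : fn) :=
  forall xi eta, boundary xi -> boundary eta -> same_cylinder L xi eta -> f xi = f eta.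

Definition locally_constant (f : fn) := exists L, determined_at L f.

Lemma locally_constant_op (op : K -> K -> K) (f g : fn) :
  locally_constant f -> locally_constant g -> locally_constant (fun xi => op (f xi) (g xi)).
Proof.
move=> [Lf detf] [Lg detg]; exists (maxn Lf Lg) => xi eta bxi beta cyl.
rewrite (detf xi eta) ?(detg xi eta) //; apply: same_cylinder_le cyl.
  exact: leq_maxr.
exact: leq_maxl.
Qed.

Lemma locally_constant_one q : locally_constant (one q).
Proof.
rewrite /one /ind /U; case: (classify q) => [|a|b|a b|].
- by exists 0%N => xi eta bxi beta _; rewrite !decPT.
- exists (size a) => xi eta bxi beta [_ eq_a]; congr (if _ then _ else _); apply: eq_decP.
  by rewrite !hasprefixE eq_a; split=> -[].
- exists 0%N => xi eta bxi beta [eq_src _]; congr (if _ then _ else _); apply: eq_decP.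
  by rewrite eq_src; split=> -[].
- exists (size a) => xi eta bxi beta [_ eq_a]; congr (if _ then _ else _); apply: eq_decP.
  by rewrite !hasprefixE eq_a; split=> -[].
- by exists 0%N => xi eta _ _ _; rewrite !decPF.
Qed.

Lemma Dp_locally_constant t (f : fn) : Dp X t f -> locally_constant f.
Proof.
elim=> [|k g f' [q [_ ->]] _ lc_f']; first by exists 0%N.
apply: (locally_constant_op (fun a b => k * a + b)) => //.
by apply: (locally_constant_op *%R); apply: locally_constant_one.
Qed.

Lemma Dp_vanish t (f : fn) xi : Dp X t f -> ~ U t xi -> f xi = 0.
Proof.
move=> + nU; elim=> [//|k g f' [q [_ ->]] _ ->].
by rewrite /one indF // mul0r mulr0 add0r.
Qed.

End Functions.

Section Perturbation.
Variable E : graph.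
Variable X : vert E -> Prop.
Local Notation Ed := (edge E).
Local Notation r := (@gr E).
Local Notation s := (@gs E).
Local Notation bpath := (bpath E).
Local Notation boundary := (boundary X).

Lemma is_cycle_mkseq (g : nat -> Ed) d : (0 < d)%N -> (forall m, r (g m) = s (g m.+1)) ->
  s (g d) = s (g 0%N) -> {in gtn d &, injective (s \o g)} -> is_cycle (mkseq g d).
Proof.
move=> d_gt0 vg closed inj_sg; split; [|split].
- rewrite /ispath -size_eq0 size_mkseq -lt0n d_gt0.
  by apply: sorted_mkseq => m _; rewrite /consec vg.
- case: d d_gt0 closed {inj_sg} => [|d] // _ closed.
  have := nth_last (g 0%N) (mkseq g d.+1); rewrite size_mkseq nth_mkseq //= => <-.
  by rewrite vg closed.
- by rewrite /mkseq -map_comp; apply/mkseq_uniqP.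
Qed.

Lemma path_cycle (f : nat -> Ed) N i k : (forall j, r (f j) = s (f j.+1)) ->
  (N <= i)%N -> (0 < k)%N -> s (f i) = s (f (i + k)%N) ->
  exists i d, (N <= i)%N /\ is_cycle (mkseq (fun m => f (i + m)%N) d).
Proof.
move=> vf le_Ni k_gt0 rep_k.
pose repeats d := (0 < d)%N /\ exists i, (N <= i)%N /\ s (f i) = s (f (i + d)%N).
have ex_rep : exists d, decP (repeats d) by exists k; apply: decPT; split=> //; exists i.
case: (ex_minnP ex_rep) => d /decPE [d_gt0 [{le_Ni rep_k}i [le_Ni rep_d]]] min_d.
exists i, d; split=> //; apply: is_cycle_mkseq => //.
- by move=> m; rewrite addnS vf.
- by rewrite addn0 rep_d.
move=> x y; rewrite !inE => lt_xd lt_yd /= eq_s.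
wlog le_xy : x y lt_xd lt_yd eq_s / (x <= y)%N.
  by move=> wlog_xy; case: (leqP x y) => [|/ltnW] le; [|symmetry]; apply: wlog_xy.
apply/eqP; rewrite eqn_leq le_xy leqNgt; apply/negP => lt_xy.
suff rep_yx : repeats (y - x)%N by have := min_d _ (decPT rep_yx); lia.
split; first by rewrite subn_gt0.
by exists (i + x)%N; split; [lia|rewrite eq_s -addnA subnKC].
Qed.

Definition not_isolated (N : nat) (xi : bpath) :=
  exists z, [/\ boundary z, same_cylinder N z xi & z <> xi].

Lemma not_isolated_le m n xi : (m <= n)%N -> not_isolated n xi -> not_isolated m xi.
Proof. by move=> le_mn [z [bz cyl ne_z]]; exists z; split=> //; apply: same_cylinder_le cyl. Qed.

Lemma range_mkseq (f : nat -> Ed) l : (forall i, r (f i) = s (f i.+1)) ->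
  last (s (f 0%N)) (map r (mkseq f l)) = s (f l).
Proof. by move=> vf; elim: l => [|l IHl] //; rewrite mkseqS map_rcons last_rcons vf. Qed.

Lemma not_isolated_Y (f : nat -> Ed) l : (forall i, r (f i) = s (f i.+1)) ->
  Yset X (s (f l)) -> not_isolated l (BInf f).
Proof.
move=> vf Yl; exists (BFin (s (f 0%N)) (mkseq f l)); split=> //.
- split; last by right; rewrite /frange range_mkseq.
  split; first by apply: sorted_mkseq => i _; rewrite /consec vf.
  by case: l {Yl}.
- by split; rewrite //= take_oversize ?size_mkseq.
Qed.

Lemma not_isolated_exit (f : nat -> Ed) e l : (forall i, r (f i) = s (f i.+1)) ->
  s e = s (f l) -> e <> f l -> not_isolated l (BInf f).
Proof.
move=> vf se ne_e.
have [z [bz src_z]] := exists_boundary_path X (r e).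
pose g m := if (m < l)%N then f m else e.
have g_lt m : (m < l)%N -> g m = f m by rewrite /g => ->.
have gl : g l = e by rewrite /g ltnn.
exists (prepend (mkseq g l.+1) z); split.
- rewrite /mkseq /=; apply: prepend_boundary => //.
    have := @sorted_mkseq _ (@consec E) g l.+1; rewrite /mkseq /=; apply=> m lt_ml.
    rewrite /consec g_lt // vf; case: (ltnP m.+1 l) => [/g_lt -> //|le_lm].
    by rewrite (_ : m.+1 = l) ?gl ?se //; lia.
  have := nth_last e (mkseq g l.+1); rewrite size_mkseq nth_mkseq //= => <-.
  by rewrite gl src_z.
- split.
    rewrite bsrc_prepend /mkseq /=; case: (posnP l) => [l0|/g_lt -> //].
    by move: gl se; rewrite l0 => -> ->.
  rewrite btake_prepend ?size_mkseq // take_mkseq //=.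
  by rewrite /mkseq; apply/eq_in_map => m; rewrite mem_iota => /andP[_ /g_lt].
- case: z {bz src_z} => [v p|h] // [/(congr1 (fun F => F l))].
  by rewrite size_map size_iota ltnSn nth_mkseq // gl.
Qed.

(* The periodic tail winds around a cycle, which by (L) meets Y (cut the path there) or
   has an exit (leave the cycle through it). *)
Lemma not_isolated_periodic (f : nat -> Ed) n k N : rel_condL X -> boundary (BInf f) ->
  (0 < k)%N -> periodic_from n k f -> not_isolated N (BInf f).
Proof.
move=> condL [vf _] k_gt0 per_f.
have rep : s (f (N + n)%N) = s (f (N + n + k)%N) by rewrite per_f ?leq_addl.
have [i [d [le_Ni cyc]]] := path_cycle vf (leq_addr n N) k_gt0 rep.
have size_c : size (mkseq (fun m => f (i + m)%N) d) = d by rewrite size_mkseq.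
have [[m [lt_md Ym]]|noY] := classic (exists m, (m < d)%N /\ Yset X (s (f (i + m)%N))).
  by apply: (@not_isolated_le _ (i + m)) (not_isolated_Y vf Ym); lia.
have noY_c e : e \in mkseq (fun m => f (i + m)%N) d -> ~ Yset X (s e).
  by case/mapP=> m; rewrite mem_iota add0n => /andP[_ lt_md] -> Ye; apply: noY; exists m.
have [e [j [lt_jc [se ne_e]]]] := condL _ cyc noY_c.
rewrite size_c in lt_jc; rewrite nth_mkseq // in se ne_e.
by apply: (@not_isolated_le _ (i + j)) (not_isolated_exit vf se ne_e); lia.
Qed.

(* A fixed point of theta_{t^-1} replaces its prefix a by u, so it is periodic beyond |a|
   with period ||a| - |u||; two such points agreeing on |a| + that many edges coincide. *)
Lemma fixed_points_nowhere_dense (t : word E) (xi : bpath) N : rel_condL X -> t != [::] ->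
  boundary xi ->
  exists z, [/\ boundary z, same_cylinder N z xi & ~ (U X t z /\ theta (winv t) z = z)].
Proof.
move=> condL t0 bxi.
have [[Uxi fix_xi]|] := classic (U X t xi /\ theta (winv t) xi = xi); last by exists xi.
have tK : classify t <> KNone E by move=> tN; move: Uxi; rewrite /U tN.
have [a [u [ne_ua shift_t]]] := theta_inv_shift X t0 tK.
have fixed_shift z : U X t z -> theta (winv t) z = z ->
    exists f, [/\ z = BInf f, (0 < shift_period a u)%N
               & periodic_from (size a) (shift_period a u) f].
  move=> Uz fix_z; have [a_z th_z] := shift_t z Uz.
  by apply: fixed_shift_periodic; rewrite // -th_z.
have [f [xiE k_gt0 per_f]] := fixed_shift _ Uxi fix_xi; rewrite xiE in bxi *.
pose M := maxn N (size a + shift_period a u).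
have [z [bz cyl ne_z]] := not_isolated_periodic M condL bxi k_gt0 per_f.
exists z; split=> //; first by apply: same_cylinder_le cyl; apply: leq_maxl.
move=> [Uz fix_z]; apply: ne_z; have [g [zE _ per_g]] := fixed_shift _ Uz fix_z.
rewrite zE in cyl *.
congr BInf; apply: (eq_periodic_from k_gt0 (leq_maxr N _)) per_g per_f _ => j lt_jM.
case: cyl => _ /= eq_take.
by rewrite -(nth_mkseq (g 0%N) g lt_jM) -(nth_mkseq (g 0%N) f lt_jM) eq_take.
Qed.

End Perturbation.

Section CrossedProduct.
Variable E : graph.
Variable X : vert E -> Prop.
Variable K : fieldType.
Local Notation bpath := (bpath E).
Local Notation fn := (fn E K).
Local Notation cp := (cp E K).
Local Notation boundary := (boundary X).
Local Notation U := (U X).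
Local Notation alpha := (alpha X).
Local Notation D0 := (D0 X (K := K)).
Local Open Scope ring_scope.

Lemma coef_cons pr (x : cp) t xi :
  coef (pr :: x) t xi = (if pr.1 == t then pr.2 xi else 0) + coef x t xi.
Proof. by rewrite /coef big_cons; case: ifP; rewrite ?add0r. Qed.

Lemma coef_delta0 (a : fn) t xi : coef (delta0 a) t xi = if [::] == t then a xi else 0.
Proof. by rewrite coef_cons /coef big_nil addr0. Qed.

Lemma span_coef (S : fn -> Prop) (x : cp) t :
  (forall pr, List.In pr x -> pr.1 = t -> span S pr.2) -> span S (coef x t).
Proof.
elim: x => [|pr x IHx] Sx.
  by congr span: (span0 S); apply: functional_extensionality => xi; rewrite /coef big_nil.
have -> : coef (pr :: x) t = fun xi => (if pr.1 == t then pr.2 xi else 0) + coef x t xi.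
  by apply: functional_extensionality => xi; rewrite coef_cons.
have Sx' : span S (coef x t) by apply: IHx => pr' x_pr'; apply: Sx; right.
case: eqP => [pr_t|_]; first by apply: span_add => //; apply: Sx => //; left.
by congr span: Sx'; apply: functional_extensionality => xi; rewrite add0r.
Qed.

Lemma Dt_coef (x : cp) t : cp_elem X x -> Dt X t (coef x t).
Proof.
move=> cpx; have Dt_pr pr : List.In pr x -> pr.1 = t -> Dt X t pr.2 by move=> /cpx[_ +] <-.
by rewrite /Dt; case: ifP => t0; apply: span_coef => pr x_pr pr_t;
  move: (Dt_pr pr x_pr pr_t); rewrite /Dt t0.
Qed.

Lemma alpha_outside p (f : fn) xi : ~ U p xi -> alpha p f xi = 0.
Proof. by move=> nU; rewrite /alpha decPF. Qed.

Lemma alpha_inside p (f : fn) xi : U p xi -> alpha p f xi = f (theta (winv p) xi).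
Proof. by move=> Uxi; rewrite /alpha decPT. Qed.

Lemma alphaD p (f g : fn) xi : alpha p (fun z => f z + g z) xi = alpha p f xi + alpha p g xi.
Proof. by rewrite /alpha; case: decP; rewrite ?addr0. Qed.

Lemma coef_mul_delta0 (x : cp) b t xi : cp_elem X x ->
  coef (cp_mul X x (delta0 b)) t xi =
  alpha t (fun z => alpha (winv t) (coef x t) z * b z) xi.
Proof.
elim: x => [|pr x IHx] cpx.
  by rewrite /alpha /coef /=; case: decP; rewrite ?big_nil ?if_same ?mul0r.
have [rpr _] := cpx pr (or_introl erefl).
have coef_pr : coef (pr :: x) t = fun z => (if pr.1 == t then pr.2 z else 0) + coef x t z.
  by apply: functional_extensionality => z; rewrite coef_cons.
rewrite /cp_mul /= -/(cp_mul X x (delta0 b)) coef_cons wmulw0 // IHx; last first.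
  by move=> pr' x_pr'; apply: cpx; right.
rewrite coef_pr; case: eqP => [<-|_].
  rewrite -alphaD; congr alpha; apply: functional_extensionality => z.
  by rewrite -mulrDl -alphaD.
rewrite add0r; congr alpha; apply: functional_extensionality => z; congr (_ * _).
by congr alpha; apply: functional_extensionality => w; rewrite add0r.
Qed.

Lemma coef_delta0_mul (x : cp) b t xi :
  coef (cp_mul X (delta0 b) x) t xi = if decP (boundary xi) then b xi * coef x t xi else 0.
Proof.
elim: x => [|pr x IHx]; first by rewrite /coef !big_nil; case: decP; rewrite ?mulr0.
have -> : cp_mul X (delta0 b) (pr :: x) =
    (pr.1, alpha [::] (fun z => alpha [::] b z * pr.2 z)) :: cp_mul X (delta0 b) x.
  by rewrite /cp_mul /= !cats0.
have theta0 z : theta (winv [::]) z = z by [].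
rewrite !coef_cons IHx /alpha /= !theta0.
by case: decP; rewrite ?if_same ?addr0 // mulrDr; case: eqP; rewrite ?mulr0.
Qed.

Definition commutes_with_D0 (x : cp) :=
  forall b, D0 b -> cp_eq (cp_mul X x (delta0 b)) (cp_mul X (delta0 b) x).

(* The t-coefficient of x (b delta_0) - (b delta_0) x at z is
   a_t(z) (b(theta_{t^-1} z) - b(z)), and some b in D separates z from theta_{t^-1} z. *)
Lemma commutant_coef_fixed (x : cp) t z : cp_elem X x -> commutes_with_D0 x ->
  boundary z -> theta (winv t) z <> z -> coef x t z = 0.
Proof.
move=> cpx comm bz moved; have [b [D0b bz1 bz0]] := D0_separates K bz (nesym moved).
have := comm b D0b t z; rewrite coef_mul_delta0 // coef_delta0_mul decPT // bz1 mul1r => <-.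
by rewrite /alpha; case: decP; rewrite // bz0 mulr0.
Qed.

Lemma rel_condL_maximal_commutative : rel_condL X -> D0_maximal_commutative X K.
Proof.
move=> condL x cpx comm; exists (coef x [::]); split; first exact: (Dt_coef [::] cpx).
move=> t xi; rewrite coef_delta0; case: eqP => [<- //|/eqP]; rewrite eq_sym => t0.
have Dp_coef : Dp X t (coef x t) by move: (Dt_coef t cpx); rewrite /Dt (negPf t0).
have vanish z : ~ U t z -> coef x t z = 0 by apply: Dp_vanish.
have [Uxi|] := classic (U t xi); last exact: vanish.
have [L detL] := Dp_locally_constant Dp_coef.
have bxi := U_boundary Uxi.
have [z [bz cyl not_fixed]] := fixed_points_nowhere_dense L condL t0 bxi.
rewrite -(detL z xi bz bxi cyl).
have [Uz|] := classic (U t z); last exact: vanish.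
by apply: commutant_coef_fixed => // fix_z; apply: not_fixed.
Qed.

End CrossedProduct.

Section ExitlessCycle.
Variable E : graph.
Variable X : vert E -> Prop.
Variable K : fieldType.
Local Notation Ed := (edge E).
Local Notation r := (@gr E).
Local Notation s := (@gs E).
Local Notation bpath := (bpath E).
Local Notation boundary := (boundary X).
Local Open Scope ring_scope.

Variables (e0 : Ed) (c' : seq Ed).
Local Notation c := (e0 :: c').
Hypothesis sorted_c : sorted (@consec E) c.
Hypothesis closed_c : r (last e0 c') = s e0.
Hypothesis c_exitless : forall e i, (i < size c)%N -> s e = s (nth e c i) -> e = nth e c i.
Hypothesis c_notY : forall e, e \in c -> ~ Yset X (s e).

Local Notation ci := (cycle_inf e0 c).

Lemma cycle_inf_consec i : r (ci i) = s (ci i.+1).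
Proof.
have c_gt0 : (0 < size c)%N by [].
rewrite /cycle_inf; set j := (i %% size c)%N; have lt_jc : (j < size c)%N by rewrite ltn_pmod.
have -> : (i.+1 %% size c = if (j.+1 < size c) then j.+1 else 0)%N.
  rewrite {1}(divn_eq i (size c)) -addnS modnMDl -/j; case: ltnP => [|le_cj].
    by move=> lt_j1c; rewrite modn_small.
  by rewrite (_ : j.+1 = size c) ?modnn //; apply/eqP; rewrite eqn_leq le_cj lt_jc.
case: ltnP => [lt_j1c|le_cj1]; first by move/(sortedP e0): sorted_c => /(_ j lt_j1c) /eqP.
have -> : j = (size c).-1 by move: lt_jc le_cj1; rewrite /= -/j; lia.
by rewrite nth_last.
Qed.

Lemma cycle_inf_exitless e i : s e = s (ci i) -> e = ci i.
Proof.
rewrite /cycle_inf => se; have lt_ic : (i %% size c < size c)%N by rewrite ltn_pmod.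
by have := @c_exitless e _ lt_ic; rewrite !(set_nth_default e0 _ lt_ic); apply.
Qed.

Lemma follows_cycle_inf (h : nat -> Ed) n : h 0%N = e0 ->
  (forall i, (i.+1 < n)%N -> r (h i) = s (h i.+1)) -> forall i, (i < n)%N -> h i = ci i.
Proof.
move=> h0 vh; elim=> [|i IHi] lt_in; first by rewrite h0 cycle_inf_small.
by apply: cycle_inf_exitless; rewrite -vh // -cycle_inf_consec IHi 1?ltnW.
Qed.

Lemma exitless_cycle_boundary (xi : bpath) : boundary xi -> hasprefix xi c -> xi = BInf ci.
Proof.
case: xi => [v p|f] /=.
  move=> [[sp _] end_p]; rewrite prefixE => /eqP take_p; exfalso.
  have lt_0p : (0 < size p)%N by case: (p) take_p.
  have p_ci : forall i, (i < size p)%N -> nth e0 p i = ci i.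
    apply: follows_cycle_inf => [|i lt_ip].
      by case: p take_p lt_0p {sp end_p} => //= e p [].
    by apply/eqP; move/(sortedP e0): sp; apply.
  have range_p : frange v p = s (ci (size p)).
    rewrite /frange; case: p take_p lt_0p sp end_p p_ci => // e p _ _ _ _ p_ci.
    rewrite /= last_map -cycle_inf_consec -p_ci //.
    by have := nth_last e0 (e :: p); rewrite /= => ->.
  rewrite range_p in end_p; case: end_p => [sink|Y].
    exact: (sink (ci (size p))).
  exact: (c_notY (cycle_inf_mem _ _ _) Y).
move=> [vf _] pre_f; congr BInf; apply: functional_extensionality => i.
by apply: (follows_cycle_inf (n := i.+1)) => //; case: pre_f.
Qed.

Local Notation t := (pos c).
Local Notation ray := (BInf ci).

Lemma ispath_cycle : ispath c.
Proof. by rewrite /ispath sorted_c. Qed.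

Lemma U_cycle (xi : bpath) : U X t xi <-> xi = ray.
Proof.
rewrite U_pos; last exact: ispath_cycle.
split=> [[bxi xi_c]|->]; first exact: exitless_cycle_boundary.
by split; [split=> //= i; apply: cycle_inf_consec|rewrite /= mkseq_cycle_inf].
Qed.

Lemma theta_cycle_inv : theta (winv t) ray = ray.
Proof.
rewrite winv_pos /theta classify_neg ?ispath_cycle //=; congr BInf.
by apply: functional_extensionality => i; apply: (cycle_inf_periodic e0 c i).
Qed.

Lemma theta_cycle : theta (winv (winv t)) ray = ray.
Proof.
rewrite winvK /theta classify_pos ?ispath_cycle //=; congr BInf.
apply: functional_extensionality => i; case: ltnP => [lt_ic|le_ci].
  by rewrite [RHS]cycle_inf_small // (set_nth_default e0).
by rewrite -[in RHS](subnK le_ci) cycle_inf_periodic.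
Qed.

Lemma alpha_cycle_inv : alpha X (winv t) (one X K t) ray = 1.
Proof.
rewrite alpha_inside; first by rewrite theta_cycle; apply: indT; apply/U_cycle.
rewrite winv_pos /U classify_neg ?ispath_cycle //; split; last by rewrite /= closed_c.
by apply/(U_boundary (t := t))/U_cycle.
Qed.

Definition cycle_elem : cp E K := [:: (t, one X K t)].

Lemma cp_elem_cycle : cp_elem X cycle_elem.
Proof.
move=> pr [<-|[]]; split; first exact: reduced_pos.
rewrite /Dt /=; apply: span_gen; exists [::]; split=> //.
apply: functional_extensionality => xi; case: (classic (U X t xi)) => Uxi.
  by rewrite /one !indT ?mulr1 //; apply: U_boundary Uxi.
by rewrite /one indF ?mul0r.
Qed.

Lemma coef_cycle_elem t' : coef cycle_elem t' = if t == t' then one X K t else fun _ => 0.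
Proof.
by apply: functional_extensionality => xi; rewrite coef_cons /coef big_nil addr0; case: eqP.
Qed.

Lemma cycle_elem_commutes : commutes_with_D0 X cycle_elem.
Proof.
move=> b _ t' xi; rewrite coef_mul_delta0 ?coef_delta0_mul; last exact: cp_elem_cycle.
rewrite coef_cycle_elem; case: eqP => [<-|_]; last first.
  by rewrite /alpha /=; case: decP; rewrite ?(if_same, mul0r, mulr0).
have [/U_cycle ->|nU] := classic (U X t xi); last first.
  by rewrite alpha_outside // /one indF // mulr0; case: decP.
have bray : boundary ray by apply/(U_boundary (t := t))/U_cycle.
rewrite alpha_inside ?theta_cycle_inv ?alpha_cycle_inv ?mul1r; last exact/U_cycle.
by rewrite decPT // /one indT ?mulr1 //; apply/U_cycle.
Qed.

Lemma cycle_elem_not_diagonal (a : fn E K) : ~ cp_eq cycle_elem (delta0 a).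
Proof.
move=> /(_ t ray); rewrite coef_cycle_elem coef_delta0 eqxx /one indT; last exact/U_cycle.
by move/eqP; rewrite oner_eq0.
Qed.

End ExitlessCycle.

Lemma maximal_commutative_rel_condL (E : graph) (X : vert E -> Prop) (K : fieldType) :
  D0_maximal_commutative X K -> rel_condL X.
Proof.
move=> maxc [|e0 c'] [pc [closed_c _]] // notY; apply: NNPP => no_exit.
have exitless e i : (i < size (e0 :: c'))%N ->
    gs e = gs (nth e (e0 :: c') i) -> e = nth e (e0 :: c') i.
  by move=> lt_ic se; apply: NNPP => ne_e; apply: no_exit; exists e, i.
have sorted_c : sorted (@consec E) (e0 :: c') by case/andP: pc.
have [a [_ diag]] := maxc (cycle_elem X K e0 c') (@cp_elem_cycle _ _ _ _ _)
  (cycle_elem_commutes sorted_c closed_c exitless notY).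
exact: (cycle_elem_not_diagonal sorted_c closed_c exitless notY diag).
Qed.

Theorem mainTheorem8 (E : graph) (X : vert E -> Prop) (K : fieldType)
  (HX : forall v, X v -> is_regular v) :
  D0_maximal_commutative X K <-> rel_condL X.
Proof.
by split; [exact: maximal_commutative_rel_condL|exact: rel_condL_maximal_commutative].
Qed.
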